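(* Let $H:\mathbb{R}^n\rightrightarrows\mathbb{R}^n$ be a convex process such that $\operatorname{dom}H+\mathcal{R}_-=\mathbb{R}^n$. Then $\mathcal{F}(H)^-\cap\operatorname{cl}(\mathcal{F}(H^+))=\{0\}$ and $\mathcal{F}(H)^-\cap\operatorname{cl}(\mathcal{F}(H^-))=\{0\}$.
   Context: A set-valued map $H:\mathbb{R}^n\rightrightarrows\mathbb{R}^n$ is a convex process (resp. linear process) if its graph $\operatorname{graph}(H)=\{(x,y)\mid y\in H(x)\}$ is a convex cone (resp. a subspace); $\operatorname{dom}(H)=\{x\mid H(x)\neq\emptyset\}$. For a set-valued map $G$, a trajectory is a sequence $(x_k)_{k\ge0}$ with $x_{k+1}\in G(x_k)$ for all $k\ge0$; the feasible set $\mathcal{F}(G)$ is the set of all $\xi$ such that there is a trajectory with $x_0=\xi$. A $q$-step trajectory is a finite sequence $(x_k)_{k=0}^q$ with $x_{k+1}\in G(x_k)$ for $0\le k<q$; the reachable set $\mathcal{R}(G)$ is the set of all $\xi$ for which there exist $q\ge 0$ and a $q$-step trajectory with $x_0=0$, $x_q=\xi$. For a convex process $H$, $L_-$ is the linear process with $\operatorname{graph}(L_-)=\operatorname{graph}(H)\cap(-\operatorname{graph}(H))$, and $\mathcal{R}_-:=\mathcal{R}(L_-)$. For a set $\mathcal{C}$, its negative polar cone is $\mathcal{C}^-=\{y\mid\langle x,y\rangle\le0\ \forall x\in\mathcal{C}\}$. The negative and positive dual processes are defined by $p\in H^-(q)\iff\langle p,x\rangle\ge\langle q,y\rangle$ for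 all $(x,y)\in\operatorname{graph}(H)$, and $p\in H^+(q)\iff\langle p,x\rangle\le\langle q,y\rangle$ for all $(x,y)\in\operatorname{graph}(H)$. $\operatorname{cl}$ denotes closure. *)

From HB Require Import structures.
From mathcomp Require Import all_boot all_order all_algebra.
From mathcomp Require Import all_classical all_reals all_analysis.
Set Implicit Arguments. Unset Strict Implicit. Unset Printing Implicit Defensive.
Import Order.TTheory GRing.Theory Num.Theory.
Import numFieldNormedType.Exports.
Local Open Scope classical_set_scope.
Local Open Scope ring_scope.

Section Defs.
Variables (R : realType) (n : nat).
Notation V := 'rV[R]_n.

Definition dotv (x y : V) : R := \sum_(i < n) x ord0 i * y ord0 i.

Definition svmap := V -> set V.

Definition graph (H : svmap) : set (V * V) := [set p | H p.1 p.2].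

Definition dom (H : svmap) : set V := [set x | exists y, H x y].

Definition convex_cone (C : set (V * V)) : Prop :=
  C (0, 0) /\
  (forall p q, C p -> C q -> C (p.1 + q.1, p.2 + q.2)) /\
  (forall (t : R) p, 0 <= t -> C p -> C (t *: p.1, t *: p.2)).

Definition subspace (C : set (V * V)) : Prop :=
  C (0, 0) /\
  (forall p q, C p -> C q -> C (p.1 + q.1, p.2 + q.2)) /\
  (forall (t : R) p, C p -> C (t *: p.1, t *: p.2)).

Definition convex_process (H : svmap) : Prop := convex_cone (graph H).
Definition linear_process (H : svmap) : Prop := subspace (graph H).

Definition trajectory (G : svmap) (x : nat -> V) : Prop :=
  forall k, G (x k) (x k.+1).

Definition feasible (G : svmap) : set V :=
  [set xi | exists x : nat -> V, x 0%N = xi /\ trajectory G x].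

Definition reachable (G : svmap) : set V :=
  [set xi | exists (q : nat) (x : nat -> V),
     x 0%N = 0 /\ x q = xi /\ (forall k, (k < q)%N -> G (x k) (x k.+1))].

Definition Lminus (H : svmap) : svmap := fun x y => H x y /\ H (- x) (- y).

Definition Rminus (H : svmap) : set V := reachable (Lminus H).

Definition neg_polar (C : set V) : set V :=
  [set y | forall x, C x -> dotv x y <= 0].

Definition neg_dual (H : svmap) : svmap :=
  fun q p => forall x y, H x y -> dotv q y <= dotv p x.

Definition pos_dual (H : svmap) : svmap :=
  fun q p => forall x y, H x y -> dotv p x <= dotv q y.

End Defs.

From HB Require Import structures.
From mathcomp Require Import all_boot all_order all_algebra.
From mathcomp Require Import all_classical all_reals all_analysis.
Set Implicit Arguments. Unset Strict Implicit. Unset Printing Implicit Defensive.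
Import Order.TTheory GRing.Theory Num.Theory.
Import numFieldNormedType.Exports.
Local Open Scope classical_set_scope.
Local Open Scope ring_scope.

(* The sets R_m of points reachable by L_- in exactly m steps form an increasing
   chain of subspaces, so they stabilise at some R_N = R_-.  Every point of R_-
   is then the endpoint of an L_- trajectory of fixed length N + 1, and such
   trajectories can be summed with shifts so as to absorb, along an H-orbit of
   the decomposition R^n = dom H + R_-, all the R_- components: this shows
   R^n = F(H) + R_-.  Feasible points of H^+ and H^- are orthogonal to R_- (the
   dual inequalities become equalities on the graph of L_-), hence so is the
   closure of their feasible sets.  A vector y of F(H)^- orthogonal to R_-
   thus satisfies <y, y> = <x, y> <= 0 for some x in F(H), i.e. y = 0. *)

Section RowVectors.
Variables (R : realType) (n : nat).
Notation V := 'rV[R]_n.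

Lemma dotvC (x y : V) : dotv x y = dotv y x.
Proof. by apply: eq_bigr => i _; rewrite mulrC. Qed.

Lemma dotvDl (x y z : V) : dotv (x + y) z = dotv x z + dotv y z.
Proof. by rewrite /dotv -big_split; apply: eq_bigr => i _; rewrite mxE mulrDl. Qed.

Lemma dotvNl (x z : V) : dotv (- x) z = - dotv x z.
Proof. by rewrite /dotv -sumrN; apply: eq_bigr => i _; rewrite mxE mulNr. Qed.

Lemma dotvNr (x z : V) : dotv z (- x) = - dotv z x.
Proof. by rewrite dotvC dotvNl dotvC. Qed.

Lemma dotv0l (z : V) : dotv 0 z = 0.
Proof. by rewrite /dotv big1 // => i _; rewrite mxE mul0r. Qed.

Lemma dotv0r (z : V) : dotv z 0 = 0.
Proof. by rewrite dotvC dotv0l. Qed.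

Lemma dotvv_le0 (y : V) : dotv y y <= 0 -> y = 0.
Proof.
move=> yy_le0; have sq_ge0 (i : 'I_n) : true -> 0 <= y 0 i * y 0 i.
  by rewrite -expr2 sqr_ge0.
have /psumr_eq0P sq_eq0 : \sum_(i < n) y 0 i * y 0 i = 0.
  by apply: le_anti; rewrite yy_le0 sumr_ge0.
apply/rowP => i; apply/eqP; rewrite mxE -[_ == 0]orbb -mulf_eq0.
by rewrite sq_eq0.
Qed.

Lemma continuous_dotvl (b : V) : continuous (fun q : V => dotv q b).
Proof.
apply: (@continuous_big _ _ +%R 0 xpredT add_continuous) => i _ q.
apply: cvgMr_tmp; [exact: nbhs_filter | exact: (@coord_continuous R 1 n 0 i q)].
Qed.

Lemma closure_dotv_eq0 (b : V) (A : set V) :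
  (forall q, A q -> dotv q b = 0) -> forall y, closure A y -> dotv y b = 0.
Proof.
move=> A_perp y.
have /closureS A_sub : A `<=` (fun q : V => dotv q b) @^-1` [set 0] by [].
move=> /A_sub; apply: preimage_closed; last exact: closed_eq.
by move=> x _; exact: continuous_dotvl.
Qed.

Lemma subspace_chain_stationary (S : nat -> set V) :
  (forall m, S m 0) ->
  (forall m a b, S m a -> S m b -> S m (a + b)) ->
  (forall m t a, S m a -> S m (t *: a)) ->
  (forall m m', (m <= m')%N -> S m `<=` S m') ->
  exists N, forall m, S m `<=` S N.
Proof.
move=> S0 SD SZ S_mono; apply: contrapT => not_stationary.
have escape N : exists m b, S m b /\ ~ S N b.
  apply: contrapT => stuck; apply: not_stationary; exists N => m b Smb.
  by apply: contrapT => nSNb; apply: stuck; exists m, b.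
have free_rows k : exists m (A : 'M[R]_(k, n)),
    \rank A = k /\ forall u, S m (u *m A).
  elim: k => [|k [m [A [rankA SA]]]].
    by exists 0%N, 0; split=> [|u]; rewrite ?mxrank0 ?mulmx0.
  have [m' [b [Sb nSb]]] := escape m.
  exists (maxn m m'), (col_mx b A : 'M[R]_(1 + k, n)); split.
    have rank_adds : \rank (b + A)%MS = \rank (col_mx b A) by rewrite addsmxE.
    apply/eqP; rewrite eqn_leq rank_leq_row -rank_adds -{1}rankA rank_ltmx //.
    rewrite ltmxE addsmxSr /=; apply/negP => /(submx_trans (addsmxSl b A)).
    by case/submxP => D bDA; apply: nSb; rewrite bDA; exact: SA.
  move=> u; pose u' : 'M[R]_(1, 1 + k) := u.
  have -> : u *m col_mx b A = lsubmx u' *m b + rsubmx u' *m A.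
    by rewrite -mul_row_col hsubmxK.
  rewrite [lsubmx u']mx11_scalar mul_scalar_mx; apply: SD.
    by apply/SZ/(S_mono m'); rewrite ?leq_maxr.
  by apply/(S_mono m); rewrite ?leq_maxl.
have [m [A [rankA _]]] := free_rows n.+1.
by have := rank_leq_col A; rewrite rankA ltnn.
Qed.

End RowVectors.

Section LinearProcess.
Variables (R : realType) (n : nat) (G : svmap R n).
Notation V := 'rV[R]_n.
Hypothesis linG : linear_process G.

Lemma linear_process0 : G 0 0.
Proof. by case: linG. Qed.

Lemma linear_processD a b c d : G a b -> G c d -> G (a + c) (b + d).
Proof. by case: linG => _ [GD _] Gab Gcd; exact: (GD (a, b) (c, d)). Qed.

Lemma linear_processZ t a b : G a b -> G (t *: a) (t *: b).
Proof. by case: linG => _ [_ GZ] Gab; exact: (GZ t (a, b)). Qed.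

Lemma linear_process_sum m (F F' : 'I_m -> V) :
  (forall i, G (F i) (F' i)) -> G (\sum_(i < m) F i) (\sum_(i < m) F' i).
Proof.
move=> GF; apply: (big_ind2 G) => // *; first exact: linear_process0.
exact: linear_processD.
Qed.

Definition reachable_in (m : nat) : set V :=
  [set xi | exists x : nat -> V,
     x 0%N = 0 /\ x m = xi /\ (forall k, (k < m)%N -> G (x k) (x k.+1))].

Lemma reachable_in0 m : reachable_in m 0.
Proof. by exists (fun=> 0); do 2!split=> //; move=> k _; exact: linear_process0. Qed.

Lemma reachable_inD m a b :
  reachable_in m a -> reachable_in m b -> reachable_in m (a + b).
Proof.
move=> [x [x0 [xm Gx]]] [y [y0 [ym Gy]]]; exists (fun k => x k + y k).
rewrite x0 y0 xm ym addr0; split=> //; split=> // k km.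
by apply: linear_processD; [exact: Gx | exact: Gy].
Qed.

Lemma reachable_inZ m t a : reachable_in m a -> reachable_in m (t *: a).
Proof.
move=> [x [x0 [xm Gx]]]; exists (fun k => t *: x k).
rewrite x0 xm scaler0; split=> //; split=> // k km.
by apply: linear_processZ; exact: Gx.
Qed.

Lemma reachable_in_succ m : reachable_in m `<=` reachable_in m.+1.
Proof.
move=> b [x [x0 [xm Gx]]]; exists (fun k => if k is k'.+1 then x k' else 0).
do 2!split=> //; case=> [_|k km]; last exact: Gx.
by rewrite x0; exact: linear_process0.
Qed.

Lemma reachable_in_mono m m' :
  (m <= m')%N -> reachable_in m `<=` reachable_in m'.
Proof.
move=> /subnK <-; elim: (m' - m)%N => [|j IH] b; first by rewrite add0n.
by move=> /IH; rewrite addSn; exact: reachable_in_succ.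
Qed.

Lemma reachable_stationary : exists N, reachable G `<=` reachable_in N.
Proof.
have [N stat] := subspace_chain_stationary reachable_in0 reachable_inD
  reachable_inZ reachable_in_mono.
by exists N => b [m]; exact: stat.
Qed.

Lemma reachable0 : reachable G 0.
Proof. by exists 0%N; exact: reachable_in0. Qed.

Lemma reachableD a b : reachable G a -> reachable G b -> reachable G (a + b).
Proof.
move=> [m Ra] [m' Rb]; exists (maxn m m').
by apply: reachable_inD; [move: Ra | move: Rb]; apply: reachable_in_mono;
  rewrite ?leq_maxl ?leq_maxr.
Qed.

Lemma reachable_absorb N (b : nat -> V) :
  (forall k, reachable_in N.+1 (b k)) ->
  exists d : nat -> V,
    (forall k, G (d k) (b k + d k.+1)) /\ forall k, reachable G (d k).
Proof.
(* [d k] superposes the trajectories [U (k + i)] reaching [b (k + i)], each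
   taken at time [N - i]: one step advances all of them and completes [U k]. *)
move=> /choice [U hU].
exists (fun k => \sum_(i < N.+1) U (k + i)%N (N - i)%N); split=> k.
  have -> : b k + \sum_(i < N.+1) U (k.+1 + i)%N (N - i)%N =
            \sum_(i < N.+1) U (k + i)%N (N - i).+1.
    rewrite [RHS]big_ord_recl /= addn0 subn0; have [_ [-> _]] := hU k.
    congr (_ + _); rewrite [LHS]big_ord_recr /= subnn.
    have [-> _] := hU (k.+1 + N)%N; rewrite addr0.
    by apply: eq_bigr => i _; rewrite /bump /= add1n addnS addSn subnSK.
  apply: linear_process_sum => i; have [_ [_ GU]] := hU (k + i)%N.
  by apply: GU; rewrite ltnS leq_subr.
apply: (big_ind (reachable G)) => [|a a'|i _]; [exact: reachable0|exact: reachableD|].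
have [U0 [_ GU]] := hU (k + i)%N.
exists (N - i)%N, (U (k + i)%N); split=> //; split=> // j ji.
by apply: GU; rewrite (leq_trans ji) // (leq_trans (leq_subr i N)).
Qed.

End LinearProcess.

Section Trajectories.
Variables (R : realType) (n : nat).
Notation V := 'rV[R]_n.

Lemma viable_feasible (G : svmap R n) (D : set V) :
  (forall x, D x -> exists y, D y /\ G x y) -> D `<=` feasible G.
Proof.
move=> viable x0 Dx0.
have step x : exists y, D x -> D y /\ G x y.
  by have [/viable [y Gxy]|nDx] := pselect (D x); [exists y | exists x].
have [next Hnext] := choice step.
have D_iter k : D (iter k next x0) by elim: k => //= k /Hnext [].
by exists (fun k => iter k next x0); split=> // k; have [] := Hnext _ (D_iter k).
Qed.

Lemma feasible_perp_reachable (D G : svmap R n) :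
  (forall q p x y, D q p -> G x y -> dotv p x = dotv q y) ->
  forall q b, feasible D q -> reachable G b -> dotv q b = 0.
Proof.
move=> adj q b [Q [<- DQ]] [m [x [x0 [<- Gx]]]].
elim: m Q DQ Gx => [|m IH] Q DQ Gx; first by rewrite x0 dotv0r.
rewrite -(adj _ _ _ _ (DQ 0%N) (Gx m (ltnSn m))).
apply: (IH (fun k => Q k.+1)) => [k | k km]; first exact: DQ.
by apply: Gx; rewrite ltnS ltnW.
Qed.

End Trajectories.

Section ConvexProcess.
Variables (R : realType) (n : nat) (H : svmap R n).
Notation V := 'rV[R]_n.

Lemma pos_dual_adjoint q p x y :
  pos_dual H q p -> Lminus H x y -> dotv p x = dotv q y.
Proof.
move=> Dqp [Hxy HNxy]; apply/eqP; rewrite eq_le Dqp //=.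
by have := Dqp _ _ HNxy; rewrite !dotvNr lerN2.
Qed.

Lemma neg_dual_adjoint q p x y :
  neg_dual H q p -> Lminus H x y -> dotv p x = dotv q y.
Proof.
move=> Dqp [Hxy HNxy]; apply/eqP; rewrite eq_le Dqp // andbT.
by have := Dqp _ _ HNxy; rewrite !dotvNr lerN2.
Qed.

Hypothesis cone : convex_process H.

Lemma Lminus_linear : linear_process (Lminus H).
Proof.
have [H00 [HD HZ]] := cone.
split; first by split; rewrite /= ?oppr0; exact: H00.
split=> [[x y] [x' y'] [Hxy HNxy] [Hx'y' HNx'y'] | t [x y] [Hxy HNxy]] /=.
  split; first exact: (HD (x, y) (x', y')).
  by rewrite !opprD; exact: (HD (- x, - y) (- x', - y')).
have [t_ge0|t_lt0] := leP 0 t.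
  by split; rewrite -?scalerN; [exact: (HZ t (x, y)) | exact: (HZ t (- x, - y))].
have Nt_ge0 : 0 <= - t by rewrite oppr_ge0 ltW.
have t_eq : t = - (- t) by rewrite opprK.
split=> /=; rewrite t_eq !(scaleNr (- t)).
  by rewrite -!scalerN; exact: (HZ _ (- x, - y)).
by rewrite !opprK; exact: (HZ _ (x, y)).
Qed.

Hypothesis dom_Rminus : forall z : V, exists a b, dom H a /\ Rminus H b /\ z = a + b.

Lemma feasible_add_Rminus z : exists x b, feasible H x /\ Rminus H b /\ z = x + b.
Proof.
have [a0 [b0 [dom_a0 [Rb0 ->]]]] := dom_Rminus z.
pose H_mod_Rminus a a' := dom H a' /\ exists b, Rminus H b /\ H a (a' + b).
have [a [<- Ha]] : feasible H_mod_Rminus a0.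
  apply: (@viable_feasible _ _ _ (dom H)) dom_a0 => x [y Hxy].
  have [a' [b [dom_a' [Rb y_eq]]]] := dom_Rminus y.
  by exists a'; split=> //; split=> //; exists b; rewrite -y_eq.
have [b Hb] := choice (fun k => (Ha k).2).
have [N stat] := reachable_stationary Lminus_linear.
have [|d [Ld Rd]] := reachable_absorb Lminus_linear (N := N) (b := b).
  by move=> k; apply: (reachable_in_succ Lminus_linear); exact: stat (Hb k).1.
exists (a 0%N - d 0%N), (d 0%N + b0); split; last split.
- exists (fun k => a k - d k); split=> // k.
  have [HD _] := cone.2.
  have := HD (_, _) (_, _) (Hb k).2 (Ld k).2.
  by rewrite /= opprD addrA addrK.
- exact: reachableD Lminus_linear _ _ (Rd 0%N) Rb0.
- by rewrite addrA subrK.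
Qed.

Lemma neg_polar_perp_Rminus_eq0 y :
  neg_polar (feasible H) y -> (forall b, Rminus H b -> dotv y b = 0) -> y = 0.
Proof.
move=> Fy y_perp; have [x [b [Fx [Rb y_eq]]]] := feasible_add_Rminus y.
apply: dotvv_le0; rewrite {1}y_eq dotvDl [dotv b y]dotvC y_perp // addr0.
exact: Fy.
Qed.

Lemma neg_polar_closure_feasible_adjoint (D : svmap R n) :
  D 0 0 -> (forall q p x y, D q p -> Lminus H x y -> dotv p x = dotv q y) ->
  neg_polar (feasible H) `&` closure (feasible D) = [set 0].
Proof.
move=> D00 adj; apply/seteqP; split=> [y [Fy clDy] | _ ->].
  apply: neg_polar_perp_Rminus_eq0 Fy _ => b Rb.
  by apply: closure_dotv_eq0 clDy => q Dq; exact: feasible_perp_reachable adj q b Dq Rb.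
split=> [x _|]; first by rewrite dotv0r.
by apply: subset_closure; exists (fun=> 0); split.
Qed.

End ConvexProcess.

Theorem lemma2 (R : realType) (n : nat) (H : svmap R n) :
  convex_process H ->
  (forall z : 'rV[R]_n, exists a b, dom H a /\ Rminus H b /\ z = a + b) ->
  neg_polar (feasible H) `&` closure (feasible (pos_dual H)) = [set 0] /\
  neg_polar (feasible H) `&` closure (feasible (neg_dual H)) = [set 0].
Proof.
move=> cone dom_Rminus; split; apply: neg_polar_closure_feasible_adjoint => //.
- by move=> x y _; rewrite !dotv0l.
- exact: pos_dual_adjoint.
- by move=> x y _; rewrite !dotv0l.
- exact: neg_dual_adjoint.
Qed.
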